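(* Let $G\le\mathrm{Aut}(T)$ be a weakly branch group. Then the minimal compact $G$-spaces on which the $G$-action is faithful and micro-supported are exactly the highly proximal extensions of $\partial T$.
   Context: $T$ is a locally finite rooted tree, $\mathrm{Aut}(T)$ its root-fixing automorphisms, $\partial T$ its boundary (a compact $G$-space). $G$ is weakly branch if $T$ is infinite and spherically homogeneous, $G$ is transitive on each level, and for every vertex $v$ the subgroup of elements acting trivially outside the subtree below $v$ is non-trivial. An action of $G$ on a compact space $X$ is micro-supported if for every non-empty open $U\subset X$ the rigid stabilizer $\mathrm{Rist}_G(U)$ (elements fixing $X\setminus U$ pointwise) is non-trivial. A continuous surjective $G$-equivariant map $\pi:Y\to Z$ between compact $G$-spaces is a highly proximal extension if for every non-empty open $U\subseteq Y$ there exists $z\in Z$ with $\pi^{-1}(z)\subseteq U$; $Y$ is then a highly proximal extension of $Z$. *)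

From HB Require Import structures.
From mathcomp Require Import all_boot all_order all_algebra.
From mathcomp Require Import all_classical all_reals all_analysis.
Set Implicit Arguments. Unset Strict Implicit. Unset Printing Implicit Defensive.
Local Open Scope classical_set_scope.

(* The spherically homogeneous rooted tree T_m with branching sequence m:     *)
(* vertices of level n are the words v = [:: v_0; ...; v_(n-1)] with          *)
(* v_i < m i; the root is [::]; the parent of a non-root v is belast-word      *)
(* take (size v).-1 v.  (Every infinite spherically homogeneous locally        *)
(* finite rooted tree is isomorphic to some T_m with m i > 0 for all i.)      *)

Definition vertex (m : nat -> nat) (v : seq nat) : Prop :=
  forall i, (i < size v)%N -> (nth 0%N v i < m i)%N.

Definition parent (v : seq nat) : seq nat := take (size v).-1 v.

(* Root-fixing automorphisms of T_m, represented as maps on words that are  *)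
(* the identity off the vertex set (so that equality of automorphisms is     *)
(* plain equality of functions): a bijection of the vertex set fixing the    *)
(* root and commuting with the parent map (i.e. preserving the edges).       *)
Definition is_aut (m : nat -> nat) (g : seq nat -> seq nat) : Prop :=
  [/\ (forall v, ~ vertex m v -> g v = v),
      (forall v, vertex m v -> vertex m (g v)),
      (forall v, vertex m v -> exists2 w, vertex m w & g w = v),
      (forall v w, vertex m v -> vertex m w -> g v = g w -> v = w) &
      g [::] = [::] /\
      (forall v, vertex m v -> v <> [::] -> g (parent v) = parent (g v))].

Definition aut_subgroup (m : nat -> nat) (G : set (seq nat -> seq nat)) : Prop :=
  [/\ G `<=` is_aut m, G id,
      (forall g h, G g -> G h -> G (g \o h)) &
      (forall g, G g -> exists2 h, G h & h \o g = id /\ g \o h = id)].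

Definition below (v w : seq nat) : Prop := take (size v) w = v.

Definition rist_vertex (m : nat -> nat) (G : set (seq nat -> seq nat))
    (v : seq nat) : set (seq nat -> seq nat) :=
  [set g | G g /\ forall w, vertex m w -> ~ below v w -> g w = w].

(* Weakly branch groups (T = T_m infinite: m i > 0 for all i). *)
Definition weakly_branch (m : nat -> nat) (G : set (seq nat -> seq nat)) : Prop :=
  [/\ aut_subgroup m G,
      (forall i, (0 < m i)%N),
      (forall u v, vertex m u -> vertex m v -> size u = size v ->
          exists2 g, G g & g u = v) &
      (forall v, vertex m v -> exists2 g, rist_vertex m G v g & g <> id)].

(* The boundary dT_m: the rays, i.e. sequences xi with xi i < m i, as a      *)
(* subspace of the product {ptws nat -> nat} (nat discrete).                 *)
Definition boundary (m : nat -> nat) : set {ptws nat -> nat} :=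
  [set xi | forall i, (xi i < m i)%N].

Definition bact (g : seq nat -> seq nat) (xi : {ptws nat -> nat})
  : {ptws nat -> nat} := fun n => nth 0%N (g (mkseq xi n.+1)) n.

Definition is_Gspace (G : set (seq nat -> seq nat)) (X : topologicalType)
    (act : (seq nat -> seq nat) -> X -> X) : Prop :=
  [/\ hausdorff_space X, compact [set: X],
      (forall g, G g -> continuous (act g)),
      act id = id &
      (forall g h, G g -> G h -> act (g \o h) = act g \o act h)].

Definition faithful_action (G : set (seq nat -> seq nat)) (X : Type)
    (act : (seq nat -> seq nat) -> X -> X) : Prop :=
  forall g, G g -> act g = id -> g = id.

Definition minimal_action (G : set (seq nat -> seq nat)) (X : topologicalType)
    (act : (seq nat -> seq nat) -> X -> X) : Prop :=
  [set: X] !=set0 /\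
  forall C : set X, closed C -> (forall g x, G g -> C x -> C (act g x)) ->
    C = set0 \/ C = setT.

Definition rist (G : set (seq nat -> seq nat)) (X : Type)
    (act : (seq nat -> seq nat) -> X -> X) (U : set X)
  : set (seq nat -> seq nat) :=
  [set g | G g /\ forall x, ~ U x -> act g x = x].

Definition micro_supported (G : set (seq nat -> seq nat)) (X : topologicalType)
    (act : (seq nat -> seq nat) -> X -> X) : Prop :=
  forall U : set X, open U -> U !=set0 -> exists2 g, rist G act U g & g <> id.

Definition highly_proximal_ext (m : nat -> nat) (G : set (seq nat -> seq nat))
    (X : topologicalType) (act : (seq nat -> seq nat) -> X -> X)
    (pi : X -> {ptws nat -> nat}) : Prop :=
  [/\ continuous pi,
      (forall x, boundary m (pi x)),
      (forall z, boundary m z -> exists x, pi x = z),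
      (forall g x, G g -> pi (act g x) = bact g (pi x)) &
      (forall U : set X, open U -> U !=set0 ->
         exists2 z, boundary m z & pi @^-1` [set z] `<=` U)].

From HB Require Import structures.
From mathcomp Require Import all_boot all_order all_algebra.
From mathcomp Require Import all_classical all_reals all_analysis.
Local Open Scope classical_set_scope.
Set Implicit Arguments.

(* For a vertex v let S_v be the set of points of X moved by some element of
   the rigid stabiliser Rist_G(v); it is open. In a faithful micro-supported
   action every non-empty open W carries a non-trivial element of Rist_G(W)
   fixing a prescribed vertex (pigeonhole on the finite level of that vertex).
   Commutators with such elements localise elements of Rist_G(v): if S_v met S_w
   for distinct vertices v, w of the same level, two such steps would produce
   non-commuting elements of Rist_G(v) and Rist_G(w), although their supports in
   the tree are disjoint. By minimality the S_v of one level cover X, so every x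
   lies in exactly one S_v per level; these vertices form a ray pi(x), and
   pi : X -> dT is continuous, equivariant, onto (its image is compact and meets
   every cylinder), and highly proximal, since a non-trivial element of
   Rist_G(U) moving a vertex u pushes pi^-1(cylinder of u) into U.
   Conversely, for a highly proximal extension pi, level transitivity makes
   pi(C) meet every cylinder, so pi(C) = dT for every non-empty closed invariant
   C, and C meets the fibre that lies in any given open set; Rist_G(v) fixes
   every point whose image avoids the cylinder of v, which gives
   micro-support; faithfulness is inherited from dT. *)

Lemma take_mkseq (T : Type) (f : nat -> T) k n : take k (mkseq f n) = mkseq f (minn k n).
Proof. by rewrite -map_take take_iota. Qed.

Definition cylinder (v : seq nat) : set {ptws nat -> nat} :=
  [set xi | mkseq xi (size v) = v].

Section Tree.
Variable m : nat -> nat.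

Lemma vertex_take v j : vertex m v -> vertex m (take j v).
Proof.
move=> hv i; rewrite size_take_min leq_min => /andP[hj hi].
by rewrite nth_take //; apply: hv.
Qed.

Lemma vertex_nil : vertex m [::].
Proof. by []. Qed.

Lemma vertex_nseq0 n : (forall i, (0 < m i)%N) -> vertex m (nseq n 0%N).
Proof. by move=> m_gt0 i; rewrite size_nseq => hi; rewrite nth_nseq hi. Qed.

Lemma parent_rcons u x : parent (rcons u x) = u.
Proof. by rewrite /parent size_rcons -cats1 take_size_cat. Qed.

Lemma size_aut g u : is_aut m g -> vertex m u -> size (g u) = size u.
Proof.
case=> _ _ _ g_inj [g_nil g_parent].
elim/last_ind: u => [|u x IH] hux; first by rewrite g_nil.
have hu : vertex m u by rewrite -(parent_rcons u x); apply: vertex_take.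
have ux_nil : rcons u x <> [::] by case: u {IH hux hu}.
have gux_nil : g (rcons u x) <> [::].
  by move=> e; apply: ux_nil; apply: g_inj => //; rewrite e g_nil.
have := g_parent _ hux ux_nil; rewrite parent_rcons => /(congr1 size).
rewrite IH // /parent size_takel ?leq_pred // size_rcons => ->.
by rewrite prednK // lt0n size_eq0; apply/eqP.
Qed.

Lemma take_aut g u j : is_aut m g -> vertex m u -> g (take j u) = take j (g u).
Proof.
move=> ga; have [_ _ _ _ [g_nil g_parent]] := ga.
elim/last_ind: u => [|u x IH] hux; first by rewrite g_nil.
have ux_nil : rcons u x <> [::] by case: u {IH hux}.
have hu : vertex m u by rewrite -(parent_rcons u x); apply: vertex_take.
case: (leqP (size (rcons u x)) j) => hj.
  by rewrite !take_oversize // (size_aut ga hux).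
have hju : (j <= size u)%N by rewrite -ltnS -(size_rcons u x).
rewrite -cats1 takel_cat // cats1 IH //.
have := g_parent _ hux ux_nil; rewrite parent_rcons /parent (size_aut ga hux) size_rcons /=.
by move=> ->; rewrite take_takel.
Qed.

Lemma aut_moves_vertex g : is_aut m g -> g <> id -> exists2 u, vertex m u & g u <> u.
Proof.
case=> g_off _ _ _ _ g_nid; apply: contrapT => g_fix; apply/g_nid/funext => u.
apply: contrapT => gu; apply: g_fix; exists u => //.
by apply: contrapT => /g_off.
Qed.

(* [rist_vertex m G v g] is convertible to [G g /\ supported_below m v g]. *)
Definition supported_below (v : seq nat) (a : seq nat -> seq nat) :=
  forall w, vertex m w -> ~ below v w -> a w = w.

Lemma supported_below_fix v a : is_aut m a -> supported_below v a -> vertex m v -> a v = v.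
Proof.
move=> aa sa hv; have [_ a_vertex _ a_inj _] := aa.
have [//|ne] := eqVneq (a v) v.
have hav := a_vertex _ hv.
apply: (a_inj _ _ hav hv); apply: (sa _ hav).
by rewrite /below -(size_aut aa hv) take_size; apply/eqP.
Qed.

Lemma supported_below_stable v a u : is_aut m a -> supported_below v a ->
  vertex m u -> below v u -> below v (a u).
Proof.
move=> aa sa hu vu; have hv : vertex m v by rewrite -vu; apply: vertex_take.
by rewrite /below -(take_aut _ aa hu) vu (supported_below_fix aa sa hv).
Qed.

Lemma below_disjoint v w u : size v = size w -> v <> w -> below v u -> ~ below w u.
Proof. by move=> s ne vu wu; apply: ne; rewrite -vu -wu s. Qed.

Lemma supported_below_commute v w a b : is_aut m a -> is_aut m b ->
  supported_below v a -> supported_below w b -> size v = size w -> v <> w ->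
  a \o b = b \o a.
Proof.
move=> aa ab sa sb svw nvw; apply: funext => u /=.
have [a_out a_vertex _ _ _] := aa; have [b_out b_vertex _ _ _] := ab.
have [hu|hu] := pselect (vertex m u); last by rewrite (a_out _ hu) (b_out _ hu) a_out.
have [vu|vu] := pselect (below v u).
  have wu := below_disjoint svw nvw vu.
  have wau := below_disjoint svw nvw (supported_below_stable aa sa hu vu).
  by rewrite (sb _ hu wu) (sb _ (a_vertex _ hu) wau).
have [wu|wu] := pselect (below w u).
  have vbu := below_disjoint (esym svw) (nesym nvw) (supported_below_stable ab sb hu wu).
  by rewrite (sa _ hu vu) (sa _ (b_vertex _ hu) vbu).
by rewrite (sa _ hu vu) (sb _ hu wu) (sa _ hu vu).
Qed.

Lemma supported_below_conj v g g' a : is_aut m g -> is_aut m g' -> g \o g' = id ->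
  supported_below v a -> vertex m v -> supported_below (g v) (g \o a \o g').
Proof.
move=> ag ag' gg' sa hv w hw gvw /=.
have gg'w : g (g' w) = w by have := congr1 (@^~ w) gg'.
have hg'w : vertex m (g' w) by case: ag' => _ + _ _ _; apply.
rewrite (sa _ hg'w) // => vg'w; apply: gvw.
by rewrite /below (size_aut ag hv) -{1}gg'w -(take_aut _ ag hg'w) vg'w.
Qed.

Lemma supported_below_take v a j : supported_below v a -> supported_below (take j v) a.
Proof.
move=> sa w hw jvw; apply: sa => // vw; apply: jvw.
by rewrite /below -{2}vw -take_min size_take_min.
Qed.

Lemma supported_below_comp v a b :
  supported_below v a -> supported_below v b -> supported_below v (a \o b).
Proof. by move=> sa sb w hw vw /=; rewrite (sb _ hw vw) (sa _ hw vw). Qed.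

Lemma supported_below_inv v a a' : a' \o a = id ->
  supported_below v a -> supported_below v a'.
Proof. by move=> a'a sa w hw vw; rewrite -{1}(sa _ hw vw); have := congr1 (@^~ w) a'a. Qed.

Fixpoint words n : seq (seq nat) :=
  if n is n'.+1 then [seq rcons u i | u <- words n', i <- iota 0 (m n')] else [:: [::]].

Lemma mem_words u : vertex m u -> u \in words (size u).
Proof.
elim/last_ind: u => [|u x IH] hux; first by rewrite inE.
have hu : vertex m u by rewrite -(parent_rcons u x); apply: vertex_take.
rewrite size_rcons /=; apply: allpairs_f; first exact: IH.
have := hux (size u); rewrite size_rcons nth_rcons ltnn eqxx => /(_ (ltnSn _)).
by rewrite mem_iota.
Qed.

End Tree.

Section Boundary.
Variable m : nat -> nat.

Lemma vertex_mkseq z n : boundary m z -> vertex m (mkseq z n).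
Proof. by move=> hz i; rewrite size_mkseq => hi; rewrite nth_mkseq. Qed.

Lemma mkseq_bact g z n : is_aut m g -> boundary m z ->
  mkseq (bact g z) n = g (mkseq z n).
Proof.
move=> ag hz; have hv := vertex_mkseq n hz.
apply: (@eq_from_nth _ 0%N); first by rewrite (size_aut ag hv) !size_mkseq.
move=> i; rewrite size_mkseq => hi; rewrite nth_mkseq // /bact.
have -> : mkseq z i.+1 = take i.+1 (mkseq z n) by rewrite take_mkseq (minn_idPl hi).
by rewrite (take_aut _ ag hv) nth_take.
Qed.

Definition extend0 (u : seq nat) : {ptws nat -> nat} := nth 0%N u.

Lemma boundary_extend0 u : (forall i, (0 < m i)%N) -> vertex m u -> boundary m (extend0 u).
Proof.
move=> m_gt0 hu i; rewrite /extend0.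
by case: (ltnP i (size u)) => hi; [apply: hu | rewrite nth_default].
Qed.

Lemma bact_id_off_cylinder g v z : is_aut m g -> supported_below m v g ->
  boundary m z -> ~ cylinder v z -> bact g z = z.
Proof.
move=> ag sg hz zv; apply: funext => n; rewrite /bact sg ?nth_mkseq //.
  exact: vertex_mkseq.
rewrite /below take_mkseq => e; apply: zv.
case: (leqP (size v) n.+1) => hv; first by move: e; rewrite (minn_idPl hv).
by move/(congr1 size): e; rewrite size_mkseq (minn_idPr (ltnW hv)) => nv; rewrite nv ltnn in hv.
Qed.

End Boundary.

Lemma nbhs_cylinder (z : {ptws nat -> nat}) n : nbhs z (cylinder (mkseq z n)).
Proof.
have nbhs_coord t : nbhs z [set xi : {ptws nat -> nat} | xi t = z t].
  have /(@pointwise_cvgP _ _ (nbhs z) z (nbhs_filter z)) /(_ t) := @cvg_id _ (nbhs z).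
  by move=> /(_ [set y | y = z t]); apply.
rewrite /cylinder size_mkseq; elim: n => [|n IH]; first exact: (filterS _ filterT).
apply: filterS (filterI IH (nbhs_coord n)) => xi [/= e1 e2].
by rewrite !mkseqS e1 e2.
Qed.

Lemma nbhs_sub_cylinder (z : {ptws nat -> nat}) B :
  nbhs z B -> exists n, cylinder (mkseq z n) `<=` B.
Proof.
pose F := filter_from [set: nat] (cylinder \o mkseq z).
have FF : Filter F.
  apply: filter_from_filter; first by exists 0%N.
  move=> i j _ _; exists (maxn i j) => // xi; rewrite /cylinder /= !size_mkseq => e.
  have e_le k : (k <= maxn i j)%N -> mkseq xi k = mkseq z k.
    by move=> kij; have := congr1 (take k) e; rewrite !take_mkseq (minn_idPl kij).
  by split; apply: e_le; rewrite ?leq_maxl ?leq_maxr.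
have Fz : F --> z.
  apply/(@pointwise_cvgP _ _ F z FF) => t A /= At; exists t.+1 => // xi /=.
  rewrite /cylinder size_mkseq => /(congr1 (nth 0%N ^~ t)); rewrite !nth_mkseq // => ->.
  exact: nbhs_singleton.
by move=> /Fz [n _ hn]; exists n.
Qed.

Lemma closed_cylinder v : closed (cylinder v).
Proof.
rewrite -[cylinder v]setCK closedC openE => xi nxi.
apply: filterS (nbhs_cylinder xi (size v)) => zeta.
by rewrite /cylinder size_mkseq /= => -> /nxi.
Qed.

Lemma closed_meeting_cylinders (A : set {ptws nat -> nat}) z : closed A ->
  (forall n, exists2 a, A a & mkseq a n = mkseq z n) -> A z.
Proof.
move=> clA meets; apply: clA => B /nbhs_sub_cylinder[n zB].
have [a Aa an] := meets n; exists a; split => //; apply: zB.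
by rewrite /cylinder size_mkseq.
Qed.

Lemma ptws_hausdorff : hausdorff_space {ptws nat -> nat}.
Proof. exact: (hausdorff_product (fun _ => order_hausdorff)). Qed.

Lemma closed_image (X Y : topologicalType) (f : X -> Y) (C : set X) :
  hausdorff_space Y -> compact [set: X] -> continuous f -> closed C -> closed (f @` C).
Proof.
move=> hY cX cf clC; apply: compact_closed => //.
apply: continuous_compact; first exact: continuous_subspaceT.
exact: subclosed_compact clC cX (subsetT C).
Qed.

Lemma separating_nbhs (X Y : topologicalType) (f h : X -> Y) {x} :
  hausdorff_space Y -> continuous f -> continuous h -> f x <> h x ->
  exists U, [/\ open U, U x & forall y y', U y -> U y' -> f y <> h y'].
Proof.
rewrite open_hausdorff => hY cf ch /eqP /hY[[P Q] /= [Pfx Qhx] [oP oQ /eqP PQ]].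
exists (f @^-1` P `&` h @^-1` Q); split.
- by apply: openI; apply: open_comp => // y _.
- by split; apply/set_mem.
- move=> y y' [Py _] [_ Qy'] e.
  suff : (P `&` Q) (f y) by rewrite PQ.
  by split => //; rewrite e.
Qed.

Lemma continuous_id (X : topologicalType) : continuous (@id X).
Proof. by move=> x; apply: cvg_id. Qed.

Lemma pigeonhole_seq {T : eqType} {f : nat -> T} {l : seq T} K : (size l < K)%N ->
  (forall i, (i < K)%N -> f i \in l) -> exists i j, (i < j < K)%N /\ f i = f j.
Proof.
move=> lK fl; apply: contrapT => f_inj.
have fK_uniq : uniq (map f (iota 0 K)).
  rewrite map_inj_in_uniq ?iota_uniq // => i j; rewrite !mem_iota /= => iK jK e.
  case: (ltngtP i j) => // [ij|ji]; exfalso; apply: f_inj.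
    by exists i, j; rewrite ij jK.
  by exists j, i; rewrite ji iK.
have fK_l : {subset map f (iota 0 K) <= l}.
  by move=> y /mapP[i]; rewrite mem_iota /= => iK ->; apply: fl.
by have := uniq_leq_size fK_uniq fK_l; rewrite size_map size_iota leqNgt lK.
Qed.

Section GSpace.
Context {m : nat -> nat} {G : set (seq nat -> seq nat)} {X : topologicalType}
  {act : (seq nat -> seq nat) -> X -> X}.
Hypotheses (HG : aut_subgroup m G) (HX : is_Gspace G act).

Lemma G_aut {g} : G g -> is_aut m g.
Proof. by case: HG => + _ _ _; apply. Qed.

Lemma G_comp {g h} : G g -> G h -> G (g \o h).
Proof. by case: HG => _ _ + _; apply. Qed.

Lemma G_inverse {g} : G g -> exists g', [/\ G g', g' \o g = id & g \o g' = id].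
Proof. by case: HG => _ _ _ /[apply] -[g' Gg' [g'g gg']]; exists g'. Qed.

Lemma act_comp {g h} x : G g -> G h -> act (g \o h) x = act g (act h x).
Proof. by case: HX => _ _ _ _ act_morph Gg Gh; rewrite act_morph. Qed.

Lemma act_cancel g g' x : G g -> G g' -> g' \o g = id -> act g' (act g x) = x.
Proof. by move=> Gg Gg' g'g; rewrite -act_comp // g'g; case: HX => _ _ _ ->. Qed.

Lemma act_inj {g} : G g -> injective (act g).
Proof.
move=> Gg x y e; have [g' [Gg' g'g _]] := G_inverse Gg.
by rewrite -(act_cancel x Gg Gg' g'g) e act_cancel.
Qed.

Lemma act_continuous {g} : G g -> continuous (act g).
Proof. by case: HX => _ _ + _ _; apply. Qed.

Lemma displaced_nbhs {g x} : G g -> act g x <> x ->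
  exists U, [/\ open U, U x & forall y y', U y -> U y' -> act g y <> y'].
Proof.
have hX : hausdorff_space X by case: HX.
by move=> Gg; apply: separating_nbhs hX (act_continuous Gg) (@continuous_id X).
Qed.

Lemma open_moved {g} : G g -> open [set x | act g x <> x].
Proof.
move=> Gg; rewrite openE => x /(displaced_nbhs Gg)[U [oU Ux gU]].
by apply: filterS (open_nbhs_nbhs (conj oU Ux)) => y Uy; apply: gU.
Qed.

Lemma rist_comp (W : set X) a b : rist G act W a -> rist G act W b -> rist G act W (a \o b).
Proof.
move=> [Ga a_out] [Gb b_out]; split; first exact: G_comp.
by move=> y Wy; rewrite act_comp // b_out // a_out.
Qed.

Lemma rist_inverse (W : set X) k k' : rist G act W k -> G k' -> k' \o k = id ->
  rist G act W k'.
Proof.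
move=> [Gk k_out] Gk' k'k; split => // y Wy.
by rewrite -{1}(k_out _ Wy) act_cancel.
Qed.

Lemma rist_stable (W : set X) k {y} : rist G act W k -> W y -> W (act k y).
Proof.
move=> [Gk k_out] Wy; apply: contrapT => nW.
have kyy := act_inj Gk (k_out _ nW).
by apply: nW; rewrite kyy.
Qed.

Lemma rist_vertex_conj v g g' a : vertex m v -> G g -> G g' -> g \o g' = id ->
  rist_vertex m G v a -> rist_vertex m G (g v) (g \o a \o g').
Proof.
move=> hv Gg Gg' gg' [Ga sa]; split; first by apply: G_comp => //; apply: G_comp.
exact: supported_below_conj (G_aut Gg) (G_aut Gg') gg' sa hv.
Qed.

Lemma faithful_moves g : faithful_action G act -> G g -> g <> id ->
  exists x, act g x <> x.
Proof.
move=> Hf Gg g_nid; apply: contrapT => fixed; apply/g_nid/Hf => //.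
by apply: funext => x; apply: contrapT => gx; apply: fixed; exists x.
Qed.

End GSpace.

Section MicroSupported.
Context {m : nat -> nat} {G : set (seq nat -> seq nat)} {X : topologicalType}
  {act : (seq nat -> seq nat) -> X -> X}.
Hypotheses (HG : aut_subgroup m G) (HX : is_Gspace G act).
Hypotheses (Hf : faithful_action G act) (Hm : micro_supported G act).

Lemma rist_moves_inside (W : set X) k : rist G act W k -> k <> id ->
  exists2 y, W y & act k y <> y.
Proof.
move=> [Gk k_out] k_nid; have [y ky] := faithful_moves Hf Gk k_nid.
by exists y => //; apply: contrapT => /k_out.
Qed.

Lemma open_split (R : set X) : open R -> R !=set0 ->
  exists R1 R2, [/\ open R1, open R2, R1 !=set0 & R2 !=set0] /\
    [/\ R1 `<=` R, R2 `<=` R & forall y, R1 y -> R2 y -> False].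
Proof.
move=> oR nR; have [k rk k_nid] := Hm oR nR; have Gk := rk.1.
have [y Ry ky] := rist_moves_inside rk k_nid.
have [U [oU Uy kU]] := displaced_nbhs HX Gk ky.
have [k' [Gk' k'k kk']] := G_inverse HG Gk.
exists (U `&` R), (act k' @^-1` (U `&` R)); split; split.
- exact: openI.
- by apply: open_comp (openI oU oR) => z _; apply: (act_continuous HX Gk').
- by exists y.
- by exists (act k y); rewrite /= (act_cancel HX y Gk Gk' k'k).
- by move=> z [].
- move=> z [_ R_k'z]; rewrite -(act_cancel HX z Gk' Gk kk').
  exact: (rist_stable HG HX rk R_k'z).
- move=> z [Uz _] [Uz' _]; apply: (kU _ _ Uz' Uz).
  by rewrite (act_cancel HX z Gk' Gk kk').
Qed.

Lemma rist_distinct_family (W : set X) K : open W -> W !=set0 ->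
  exists ks : nat -> seq nat -> seq nat,
    (forall i, (i < K)%N -> rist G act W (ks i)) /\
    (forall i j, (j < i < K)%N -> ks i <> ks j).
Proof.
move=> oW nW.
suff [ks [R [_ _ _ ks_W ks_neq]]] : exists ks (R : set X),
    [/\ open R, R !=set0, R `<=` W,
      forall i, (i < K)%N -> rist G act W (ks i) /\ forall y, R y -> act (ks i) y = y &
      forall i j, (j < i < K)%N -> ks i <> ks j].
  by exists ks; split => // i /ks_W[].
(* Splitting R gives a new element of Rist_G(W) moving a point of R, hence
   distinct from all previous ones, which are trivial on R. *)
elim: K => [|K [ks [R [oR nR RW ks_W ks_neq]]]].
  by exists (fun=> id), W; split => // i j /andP[_]; rewrite ltn0.
have [R1 [R2 [[oR1 oR2 nR1 nR2] [R1R R2R R12]]]] := open_split oR nR.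
have [k [Gk k_out] k_nid] := Hm oR1 nR1.
exists (fun i => if i == K then k else ks i), R2; split => //.
- by move=> y /R2R /RW.
- move=> i; rewrite ltnS leq_eqVlt => /orP[/eqP ->|iK]; last first.
    have [rk kR] := ks_W i iK; rewrite (ltn_eqF iK); split => // y /R2R; exact: kR.
  rewrite eqxx; split; first by split => // y Wy; apply: k_out => /R1R /RW.
  by move=> y R2y; apply: k_out => R1y; apply: R12 R1y R2y.
- move=> i j /andP[ji]; rewrite ltnS leq_eqVlt => /orP[/eqP iK|iK]; last first.
    by rewrite (ltn_eqF iK) (ltn_eqF (ltn_trans ji iK)); apply: ks_neq; rewrite ji.
  subst i; rewrite eqxx (ltn_eqF ji) => kj.
  have [y R1y ky] := rist_moves_inside (conj Gk k_out) k_nid.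
  by apply: ky; rewrite kj; apply: (ks_W j ji).2; apply: R1R.
Qed.

Lemma rist_fix_vertex (W : set X) v : open W -> W !=set0 -> vertex m v ->
  exists k, [/\ rist G act W k, k <> id & k v = v].
Proof.
move=> oW nW hv; set K := (size (words m (size v))).+1.
have [ks [ks_W ks_neq]] := rist_distinct_family K oW nW.
have [i [j [/andP[ij jK] kv]]] : exists i j, (i < j < K)%N /\ ks i v = ks j v.
  apply: (pigeonhole_seq (f := ks^~ v) K (ltnSn _)) => i iK.
  have ai := G_aut HG (ks_W i iK).1.
  by rewrite -(size_aut ai hv); apply: mem_words; case: ai => _ + _ _ _; apply.
have rki := ks_W i (ltn_trans ij jK); have rkj := ks_W j jK.
have [kj' [Gkj' kj'kj kjkj']] := G_inverse HG rkj.1.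
exists (kj' \o ks i); split.
- exact: (rist_comp HG HX (rist_inverse HX rkj Gkj' kj'kj) rki).
- move=> kj'ki; apply: (ks_neq j i); first by rewrite ij.
  by rewrite -[ks j]/(ks j \o id) -kj'ki -[RHS]/(id \o ks i) -kjkj'.
- by rewrite /= kv; have := congr1 (@^~ v) kj'kj.
Qed.

Lemma rist_vertex_commutator {v a x} {O : set X} : vertex m v -> rist_vertex m G v a ->
  act a x <> x -> open O -> O x ->
  exists2 c, rist_vertex m G v c & exists y, [/\ O y, act c y <> y, O (act c y) &
    forall z, ~ O z -> (forall y0, O y0 -> act a y0 <> z) -> act c z = z].
Proof.
move=> hv [Ga sa] ax oO Ox.
have [Q [oQ Qx aQ]] := displaced_nbhs HX Ga ax.
have [k [rk k_nid kv]] := rist_fix_vertex (openI oQ oO) (ex_intro _ x (conj Qx Ox)) hv.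
have [Gk k_out] := rk.
have [k' [Gk' k'k kk']] := G_inverse HG Gk; have [a' [Ga' a'a aa']] := G_inverse HG Ga.
have Gka := G_comp HG Gk Ga; have Gkak' := G_comp HG Gka Gk'.
(* The commutator [k, a] acts as k on W = Q `&` O, since a moves W off itself,
   and trivially off W `|` a W. *)
exists (k \o a \o k' \o a').
  split; first exact: (G_comp HG Gkak' Ga').
  apply: supported_below_comp; last exact: supported_below_inv a'a sa.
  by rewrite -{1}kv; apply: supported_below_conj (G_aut HG Gk) (G_aut HG Gk') kk' sa hv.
have c_act z : ~ (Q `&` O) (act a' z) -> act (k \o a \o k' \o a') z = act k z.
  move=> Wa'z; rewrite (act_comp HX _ Gkak' Ga') (act_comp HX _ Gka Gk') (act_comp HX _ Gk Ga).
  rewrite (rist_inverse HX rk Gk' k'k).2 //.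
  by rewrite (act_cancel HX z Ga' Ga aa').
have c_inside y : (Q `&` O) y -> act (k \o a \o k' \o a') y = act k y.
  move=> [Qy _]; apply: c_act => -[Qa'y _]; apply: (aQ _ _ Qa'y Qy).
  by rewrite (act_cancel HX y Ga' Ga aa').
have [y Wy ky] := rist_moves_inside rk k_nid.
exists y; split; first by case: Wy.
- by rewrite c_inside.
- by rewrite c_inside //; case: (rist_stable HG HX rk Wy).
- move=> z Oz aOz; rewrite c_act; first by apply: k_out => -[].
  by move=> [_ Oa'z]; apply: (aOz _ Oa'z); rewrite (act_cancel HX z Ga' Ga aa').
Qed.

Lemma rist_vertex_supports_disjoint v w a b x : vertex m v -> size v = size w -> v <> w ->
  rist_vertex m G v a -> rist_vertex m G w b -> act a x <> x -> act b x = x.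
Proof.
(* The first commutator step yields c in Rist_G(v) and x' with x', c x', b x'
   pairwise distinct; the second yields e in Rist_G(v) moving some y but fixing
   b y, so that e and b do not commute. *)
move=> hv vw nvw ra [Gb sb] ax; apply: contrapT => bx.
have [U1 [oU1 U1x bU1]] := displaced_nbhs HX Gb bx.
have [c rc [x' [U1x' cx' U1cx' _]]] := rist_vertex_commutator hv ra ax oU1 U1x.
have bx' : act b x' <> x' := bU1 _ _ U1x' U1x'.
have bcx' : act b x' <> act c x' := bU1 _ _ U1x' U1cx'.
have [U2 [oU2 U2x' bU2]] := displaced_nbhs HX Gb bx'.
have hX : hausdorff_space X by case: HX.
have [U3 [oU3 U3x' bcU3]] :=
  separating_nbhs hX (act_continuous HX Gb) (act_continuous HX rc.1) bcx'.
have [e [Ge se] [y [[U2y U3y] ey _ e_off]]] :=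
  rist_vertex_commutator hv rc cx' (openI oU2 oU3) (conj U2x' U3x').
have eby : act e (act b y) = act b y.
  apply: e_off; first by move=> [U2by _]; apply: (bU2 _ _ U2y U2by).
  by move=> y0 [_ U3y0] cy0; apply: (bcU3 _ _ U3y U3y0); rewrite cy0.
have eb_be := supported_below_commute (G_aut HG Ge) (G_aut HG Gb) se sb vw nvw.
apply: ey; apply: (act_inj HG HX Gb).
by rewrite -(act_comp HX _ Gb Ge) -eb_be (act_comp HX _ Ge Gb) eby.
Qed.

End MicroSupported.

Section Forward.
Context {m : nat -> nat} {G : set (seq nat -> seq nat)} {X : topologicalType}
  {act : (seq nat -> seq nat) -> X -> X}.
Hypotheses (HW : weakly_branch m G) (HX : is_Gspace G act) (Hmin : minimal_action G act).
Hypotheses (Hf : faithful_action G act) (Hm : micro_supported G act).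

Let HG : aut_subgroup m G. Proof. by case: HW. Qed.

Definition rist_support v : set X :=
  \bigcup_(a in rist_vertex m G v) [set x | act a x <> x].

Lemma open_rist_support v : open (rist_support v).
Proof. by apply: bigcup_open => a [Ga _]; apply: (open_moved HX Ga). Qed.

Lemma rist_support_nonempty v : vertex m v -> rist_support v !=set0.
Proof.
move=> hv; have [_ _ _ rist_nontrivial] := HW.
have [a ra a_nid] := rist_nontrivial v hv.
by have [x ax] := faithful_moves Hf ra.1 a_nid; exists x, a.
Qed.

Lemma rist_support_conj v g x : vertex m v -> G g ->
  rist_support v x -> rist_support (g v) (act g x).
Proof.
move=> hv Gg [a ra ax]; have [g' [Gg' g'g gg']] := G_inverse HG Gg.
exists (g \o a \o g'); first exact: (rist_vertex_conj HG hv Gg Gg' gg' ra).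
have Gga := G_comp HG Gg ra.1.
rewrite /= (act_comp HX _ Gga Gg') (act_cancel HX x Gg Gg' g'g) (act_comp HX _ Gg ra.1).
by move/(act_inj HG HX Gg).
Qed.

Lemma rist_support_take v j x : rist_support v x -> rist_support (take j v) x.
Proof. by case=> a [Ga sa] ax; exists a => //; split => //; apply: supported_below_take. Qed.

Lemma rist_support_unique u u' x : vertex m u -> size u = size u' ->
  rist_support u x -> rist_support u' x -> u = u'.
Proof.
move=> hu uu' [a ra ax] [b rb bx]; apply: contrapT => nuu'.
exact: bx (rist_vertex_supports_disjoint HG HX Hf Hm hu uu' nuu' ra rb ax).
Qed.

Lemma rist_support_cover n x : exists2 v, vertex m v /\ size v = n & rist_support v x.
Proof.
pose D := \bigcup_(v in [set v | vertex m v /\ size v = n]) rist_support v.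
have D_inv g y : G g -> (~` D) y -> (~` D) (act g y).
  move=> Gg nDy [u [hu su] Su]; apply: nDy; have [g' [Gg' g'g _]] := G_inverse HG Gg.
  have ag' := G_aut HG Gg'; exists (g' u).
    by split; [case: ag' => _ + _ _ _; apply | rewrite (size_aut ag' hu)].
  by rewrite -(act_cancel HX y Gg Gg' g'g); apply: rist_support_conj.
have [_ minimal] := Hmin; have [_ m_gt0 _ _] := HW.
have clD : closed (~` D) by apply/open_closedC/bigcup_open => v _; apply: open_rist_support.
case: (minimal _ clD D_inv) => [/(congr1 setC)|nD].
  by rewrite setCK setC0 => DT; have : D x by rewrite DT.
have hv0 := @vertex_nseq0 m n m_gt0; have [y Sy] := rist_support_nonempty hv0.
have : (~` D) y by rewrite nD.
by case; exists (nseq n 0%N) => //; split; rewrite ?size_nseq.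
Qed.

Definition level_vertex x n : seq nat :=
  xget [::] [set u | [/\ vertex m u, size u = n & rist_support u x]].

Lemma level_vertexP x n :
  [/\ vertex m (level_vertex x n), size (level_vertex x n) = n &
      rist_support (level_vertex x n) x].
Proof.
have [v [hv vn] Sv] := rist_support_cover n x.
by apply: (@xgetI _ _ [set u | [/\ vertex m u, size u = n & rist_support u x]] v).
Qed.

Lemma level_vertex_eq x u : vertex m u -> rist_support u x -> level_vertex x (size u) = u.
Proof.
move=> hu Su; have [hv vn Sv] := level_vertexP x (size u).
exact: rist_support_unique hv vn Sv Su.
Qed.

Lemma level_vertex_take x {j n} : (j <= n)%N -> level_vertex x j = take j (level_vertex x n).
Proof.
move=> jn; have [hv vn Sv] := level_vertexP x n.
have := level_vertex_eq (vertex_take j hv) (rist_support_take j Sv).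
by rewrite size_takel ?vn.
Qed.

Lemma level_vertex_act g x n : G g -> level_vertex (act g x) n = g (level_vertex x n).
Proof.
move=> Gg; have [hv vn Sv] := level_vertexP x n; have ag := G_aut HG Gg.
have hgv : vertex m (g (level_vertex x n)) by case: ag => _ + _ _ _; apply.
have := level_vertex_eq hgv (rist_support_conj hv Gg Sv).
by rewrite (size_aut ag hv) vn.
Qed.

Lemma level_vertex_locally_constant x n :
  nbhs x [set y | level_vertex y n = level_vertex x n].
Proof.
have [hv vn Sv] := level_vertexP x n.
apply: filterS (open_nbhs_nbhs (conj (open_rist_support _) Sv)) => y Sy.
by rewrite /= -{1}vn level_vertex_eq.
Qed.

Definition ray x : {ptws nat -> nat} := fun n => nth 0%N (level_vertex x n.+1) n.

Lemma mkseq_ray x n : mkseq (ray x) n = level_vertex x n.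
Proof.
have [_ vn _] := level_vertexP x n.
apply: (@eq_from_nth _ 0%N); first by rewrite size_mkseq vn.
move=> i; rewrite size_mkseq => hi; rewrite nth_mkseq // /ray.
by rewrite (level_vertex_take x hi) nth_take.
Qed.

Lemma boundary_ray x : boundary m (ray x).
Proof. by move=> n; have [hv vn _] := level_vertexP x n.+1; apply: hv; rewrite vn. Qed.

Lemma ray_continuous : continuous ray.
Proof.
move=> x; apply/pointwise_cvgP => t A /= /nbhs_singleton At.
by apply: filterS (level_vertex_locally_constant x t.+1) => y /= e; rewrite /ray e.
Qed.

Lemma ray_act g x : G g -> ray (act g x) = bact g (ray x).
Proof. by move=> Gg; apply: funext => n; rewrite /bact mkseq_ray /ray level_vertex_act. Qed.

Lemma ray_surjective z : boundary m z -> exists x, ray x = z.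
Proof.
move=> hz; have [_ cX _ _ _] := HX.
suff [x _ <-] : (ray @` setT) z by exists x.
apply: closed_meeting_cylinders.
  exact: closed_image ptws_hausdorff cX ray_continuous closedT.
move=> n; have hv := vertex_mkseq n hz; have [x Sx] := rist_support_nonempty hv.
exists (ray x); first by exists x.
by rewrite mkseq_ray -{1}(size_mkseq z n) level_vertex_eq.
Qed.

Lemma ray_highly_proximal (U : set X) : open U -> U !=set0 ->
  exists2 z, boundary m z & ray @^-1` [set z] `<=` U.
Proof.
move=> oU nU; have [_ m_gt0 _ _] := HW.
have [k [Gk k_out] k_nid] := Hm oU nU; have ak := G_aut HG Gk.
have [u hu ku] := aut_moves_vertex ak k_nid.
exists (extend0 u); first exact: boundary_extend0.
move=> x /= rx; apply: contrapT => nUx.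
have e : level_vertex x (size u) = u by rewrite -mkseq_ray rx mkseq_nth.
have [_ _ Sx] := level_vertexP x (size u); rewrite e in Sx.
have := rist_support_conj hu Gk Sx; rewrite (k_out _ nUx) => Skx.
have hku : vertex m (k u) by case: ak => _ + _ _ _; apply.
by apply: ku; apply: rist_support_unique hku (size_aut ak hu) Skx Sx.
Qed.

Lemma hp_ext_of_micro_supported : exists pi, highly_proximal_ext m G act pi.
Proof.
exists ray; split.
- exact: ray_continuous.
- exact: boundary_ray.
- exact: ray_surjective.
- by move=> g x; apply: ray_act.
- exact: ray_highly_proximal.
Qed.
End Forward.

Section Reverse.
Context {m : nat -> nat} {G : set (seq nat -> seq nat)} {X : topologicalType}
  {act : (seq nat -> seq nat) -> X -> X}.
Variable pi : X -> {ptws nat -> nat}.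
Hypotheses (HW : weakly_branch m G) (HX : is_Gspace G act).
Hypothesis (Hp : highly_proximal_ext m G act pi).

Let HG : aut_subgroup m G. Proof. by case: HW. Qed.
Let m_gt0 : forall i, (0 < m i)%N. Proof. by case: HW. Qed.

Lemma closed_image_pi (C : set X) : closed C -> closed (pi @` C).
Proof.
have [_ cX _ _ _] := HX; have [pc _ _ _ _] := Hp.
exact: closed_image ptws_hausdorff cX pc.
Qed.

Lemma rist_vertex_fixes_off_cylinder v g x : rist_vertex m G v g ->
  ~ cylinder v (pi x) -> act g x = x.
Proof.
move=> [Gg sg] vx; apply: contrapT => gx.
have [pc _ ps pe php] := Hp; have [U [oU Ux gU]] := displaced_nbhs HX Gg gx.
pose O := U `&` pi @^-1` (~` cylinder v).
have oO : open O.
  by apply: openI oU (open_comp (fun y _ => pc y) _); rewrite openC; apply: closed_cylinder.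
have [z hz zO] := php O oO (ex_intro _ x (conj Ux vx)).
have [x' x'z] := ps z hz.
have [Ux' vx'] : O x' by apply: zO.
have gz : bact g z = z by apply: (bact_id_off_cylinder (G_aut HG Gg) sg hz); rewrite -x'z.
have [Ugx' _] : O (act g x') by apply: zO; rewrite /= pe // x'z gz.
by apply: (gU _ _ Ux' Ugx').
Qed.

Lemma minimal_of_hp_ext : minimal_action G act.
Proof.
have [_ pb ps pe php] := Hp; have [_ _ transitive _] := HW.
split.
  by have [x _] := ps _ (boundary_extend0 m_gt0 (vertex_nil m)); exists x.
move=> C clC C_inv; have [->|/set0P[c Cc]] := eqVneq C set0; [by left | right].
have [-> //|/setTPn[u nCu]] := eqVneq C setT.
have [z hz zC] := php (~` C) (closed_openC clC) (ex_intro _ u nCu).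
suff [c' Cc' /zC] : (pi @` C) z by [].
apply: closed_meeting_cylinders (closed_image_pi clC) _ => n.
have [g Gg gcz] := transitive _ _ (vertex_mkseq n (pb c)) (vertex_mkseq n hz)
  (etrans (size_mkseq _ _) (esym (size_mkseq _ _))).
exists (pi (act g c)); first by exists (act g c) => //; apply: C_inv.
by rewrite pe // (mkseq_bact n (G_aut HG Gg) (pb c)) gcz.
Qed.

Lemma faithful_of_hp_ext : faithful_action G act.
Proof.
move=> g Gg g_id; have ag := G_aut HG Gg; apply: funext => u /=.
have [hu|hu] := pselect (vertex m u); last by case: ag => g_off _ _ _ _; apply: g_off.
have hz := boundary_extend0 m_gt0 hu; have [_ _ ps pe _] := Hp; have [x xz] := ps _ hz.
have gz : bact g (extend0 u) = extend0 u by rewrite -xz -pe // g_id.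
have eu : mkseq (extend0 u) (size u) = u := mkseq_nth 0%N u.
by rewrite -{1}eu -(mkseq_bact _ ag hz) gz eu.
Qed.

Lemma micro_supported_of_hp_ext : micro_supported G act.
Proof.
move=> U oU nU; have [_ _ _ rist_nontrivial] := HW; have [_ _ _ _ php] := Hp.
have [z hz zU] := php U oU nU.
have : nbhs z (~` (pi @` (~` U))).
  apply: open_nbhs_nbhs; split; first by rewrite openC; apply/closed_image_pi; rewrite closedC.
  by case=> x nUx /zU.
case/nbhs_sub_cylinder => n zn.
have [g rg g_nid] := rist_nontrivial _ (vertex_mkseq n hz).
exists g => //; split; first exact: rg.1.
move=> x nUx; apply: rist_vertex_fixes_off_cylinder rg _ => cx.
by apply: (zn _ cx); exists x.
Qed.
End Reverse.

Unset Implicit Arguments.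

Theorem corollary5p35 (m : nat -> nat) (G : set (seq nat -> seq nat)) :
  weakly_branch m G ->
  forall (X : topologicalType) (act : (seq nat -> seq nat) -> X -> X),
    is_Gspace G act ->
    (minimal_action G act /\ faithful_action G act /\ micro_supported G act) <->
    (exists pi : X -> {ptws nat -> nat}, highly_proximal_ext m G act pi).
Proof.
move=> HW X act HX; split.
- by case=> Hmin [Hf Hm]; exact: (hp_ext_of_micro_supported HW HX Hmin Hf Hm).
- case=> pi Hp; split; first exact: (minimal_of_hp_ext HW HX Hp).
  split; first exact: (faithful_of_hp_ext HW Hp).
  exact: (micro_supported_of_hp_ext HW HX Hp).
Qed.
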